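(* Let $G=A\rtimes H$ be a semi-direct product of a finite abelian group $A$ and a finite group $H$ such that the action homomorphism $H\to\mathrm{Aut}(A)$ is injective. Let $(\pi,V)$ be a faithful representation of $G$ over $\mathbb{C}$. Then, via its permutation action on the one-dimensional $A$-irreducible constituents of $V$, $H$ admits an injective homomorphism $H\to S_{p}$ with $p=\dim_{\mathbb{C}}V$. Consequently $\mathrm{mdim}_{\mathbb{C}}(G)\ge\mu(H)$.
   Context: For a finite group $G$ and a field $F$, $\mathrm{mdim}_F(G)$ denotes the smallest dimension of a faithful representation of $G$ over $F$. For a finite group $H$, the minimal permutation degree $\mu(H)$ is the smallest $n$ such that $H$ embeds as a subgroup of the symmetric group $S_n$. *)

From mathcomp Require Import all_boot all_algebra all_fingroup all_solvable all_field all_character.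
Set Implicit Arguments. Unset Strict Implicit. Unset Printing Implicit Defensive.
Local Open Scope group_scope.

(* Over the field algC (complex algebraic numbers, the canonical model of C
   for the character theory of finite groups). *)

Definition has_faithful_rep (gT : finGroupType) (G : {group gT}) (n : nat) : Prop :=
  exists rG : mx_representation algC G n, mx_faithful rG.

Definition is_mdimC (gT : finGroupType) (G : {group gT}) (d : nat) : Prop :=
  has_faithful_rep G d /\ forall m, has_faithful_rep G m -> d <= m.

Definition embeds_in_Sym (gT : finGroupType) (H : {group gT}) (n : nat) : Prop :=
  exists f : {morphism H >-> {perm 'I_n}}, 'injm f.

Definition is_min_perm_degree (gT : finGroupType) (H : {group gT}) (m : nat) : Prop :=
  embeds_in_Sym H m /\ forall n, embeds_in_Sym H n -> m <= n.

From mathcomp Require Import all_boot all_algebra all_fingroup all_solvable all_field all_character.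
Set Implicit Arguments. Unset Strict Implicit. Unset Printing Implicit Defensive.
Import GRing.Theory Num.Theory.
Local Open Scope group_scope.

(* Let chi be the character of a faithful representation of G of degree p.
   Its restriction to the abelian normal subgroup A is a sum of linear
   characters, and G permutes the set S of these constituents by conjugation;
   as each occurs with multiplicity at least 1, #|S| <= p.  If y in H fixes
   every lambda in S, then lambda [~ a, y] = 1 for all a in A, so [~ a, y]
   lies in the kernel of chi, which is trivial: y centralises A, hence y = 1.
   Thus H acts faithfully on S, and embeds in Sym(S), hence in S_p. *)

Lemma embeds_in_Sym_injm (aT rT : finGroupType) (H : {group aT}) (K : {group rT})
    (f : {morphism H >-> rT}) n :
  'injm f -> f @* H \subset K -> embeds_in_Sym K n -> embeds_in_Sym H n.
Proof.
move=> injf sfHK [g injg].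
have sH_fK : H \subset f @*^-1 K by rewrite -sub_morphim_pre.
by exists (restrm sH_fK (g \o f)); apply/injm_restrm/injm_comp.
Qed.

Section PermEmbeddings.

Variable T : finType.

Definition perm_ord (s : {perm T}) : 'S_#|T| :=
  perm (inj_comp (@enum_rank_inj T) (inj_comp (@perm_inj _ s) enum_val_inj)).

Lemma perm_ordM : {in [set: {perm T}] &, {morph perm_ord : s t / s * t}}.
Proof. by move=> s t _ _; apply/permP=> i; rewrite permM !permE /= enum_rankK permM. Qed.

Canonical perm_ord_morphism := Morphism perm_ordM.

Lemma injm_perm_ord : 'injm perm_ord.
Proof.
apply/injmP=> s t _ _ st_eq; apply/permP=> x.
have := congr1 (fun q : 'S_#|T| => q (enum_rank x)) st_eq.
by rewrite !permE /= enum_rankK => /enum_rank_inj.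
Qed.

Lemma embeds_in_Sym_perm : embeds_in_Sym [set: {perm T}] #|T|.
Proof. by exists perm_ord_morphism; apply: injm_perm_ord. Qed.

End PermEmbeddings.

Section LiftPerm.

Variable m : nat.

Definition perm_lift (s : 'S_m) : 'S_m.+1 := lift_perm ord_max ord_max s.

Lemma perm_liftM : {in [set: 'S_m] &, {morph perm_lift : s t / s * t}}.
Proof. by move=> s t _ _; rewrite /perm_lift lift_permM. Qed.

Canonical perm_lift_morphism := Morphism perm_liftM.

Lemma injm_perm_lift : 'injm perm_lift.
Proof.
apply/injmP=> s t _ _ st_eq; apply/permP=> i; apply: (@lift_inj _ ord_max).
by rewrite -!(lift_perm_lift ord_max ord_max) -/(perm_lift s) st_eq.
Qed.

End LiftPerm.

Lemma embeds_in_Sym_widen (gT : finGroupType) (H : {group gT}) m n :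
  m <= n -> embeds_in_Sym H m -> embeds_in_Sym H n.
Proof.
move/subnK=> <-; elim: (n - m) => [|k IHk] /= embHm; first by [].
have [f injf] := IHk embHm.
apply: embeds_in_Sym_injm injf (subsetT _) _.
by exists (perm_lift_morphism (k + m)); apply: injm_perm_lift.
Qed.

Lemma embeds_in_Sym_faithful_on (aT : finGroupType) (D H : {group aT}) (T : finType)
    (to : action D T) (S : {set T}) n :
  [acts H, on S | to] -> [faithful H, on S | to] -> #|S| <= n -> embeds_in_Sym H n.
Proof.
move=> actsH ffulH leSn; pose sT := {x | x \in S}.
have memS : [set x | x \in S] = S by apply/setP=> x; rewrite inE.
have valS : [set val x | x in [set: sT]] = S.
  apply/setP=> x; apply/imsetP/idP=> [[y _ ->] | Sx]; first exact: valP.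
  by exists (Sub x Sx : sT).
have sH_dom : H \subset subact_dom (mem S) to by rewrite /subact_dom memS actsH.
have injf : 'injm (restrm sH_dom (actperm (to^? : action _ sT)%act)).
  rewrite ker_restrm ker_actperm astab_subact valS setIA (setIidPl sH_dom).
  exact: ffulH.
have embH : embeds_in_Sym H #|{: sT}|.
  exact: embeds_in_Sym_injm injf (subsetT _) (embeds_in_Sym_perm sT).
by apply: embeds_in_Sym_widen embH; rewrite card_sig.
Qed.

Section ConjugationOnIrr.

Variables (gT : finGroupType) (A : {group gT}).

Lemma conjg_Iirr_is_action : is_action 'N(A) (@conjg_Iirr _ A).
Proof.
split=> [y | i y z nAy nAz]; first exact: conjg_Iirr_inj.
by apply: irr_inj; rewrite !conjg_IirrE cfConjgMnorm.
Qed.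

Definition conjg_Iirr_action := Action conjg_Iirr_is_action.

End ConjugationOnIrr.

Section ConstituentsOfRestriction.

Local Open Scope ring_scope.

Variables (gT : finGroupType) (G A : {group gT}) (chi : 'CF(G)).

Let S := [set i in irr_constt ('Res[A] chi)].
Let to := conjg_Iirr_action A.

Lemma astabs_irr_constt_Res : G \subset 'N(A) -> G \subset 'N(S | to).
Proof.
move=> nAG; apply/subsetP=> y Gy; rewrite inE (subsetP nAG y Gy) inE.
by apply/subsetP=> i; rewrite !inE /= conjg_IirrE cfdot_Res_conjg.
Qed.

Lemma astab_irr_constt_Res_sub_cent :
  A <| G -> abelian A -> chi \is a character -> cfaithful chi ->
  'C_G(S | to) \subset 'C(A).
Proof.
move=> nsAG abA Nchi ffulchi; have [sAG nAG] := andP nsAG.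
have linA i : 'chi[A]_i \is a linear_char by apply/char_abelianP.
apply/subsetP=> y /setIP[Gy cSy]; have nAy := subsetP nAG y Gy.
apply/centP=> a Aa; apply/commute_sym/commgP; rewrite -in_set1 (subsetP ffulchi) //.
have Aay : [~ a, y] \in A by rewrite groupM ?groupV ?memJ_norm.
apply: (subsetP (subsetIr A _)); rewrite -cfker_Res // cfkerE ?cfRes_char //.
rewrite inE Aay; apply/bigcapP=> i Ci; have Si : i \in S by rewrite inE.
have chiJ : 'chi_i (a ^ y)%g = 'chi_i a.
  by rewrite -{1}(astab_act cSy Si) conjg_IirrE cfConjgEJ.
rewrite cfkerEirr inE lin_char1 // lin_charM ?groupV ?memJ_norm // chiJ.
by rewrite lin_charV // mulVf ?lin_char_neq0.
Qed.

End ConstituentsOfRestriction.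

Lemma card_irr_constt_le_char1 (gT : finGroupType) (G : {group gT}) (chi : 'CF(G)) :
  chi \is a character -> (#|irr_constt chi|%:R <= chi 1%g :> algC)%R.
Proof.
move=> Nchi; rewrite {2}[chi]cfun_sum_constt sum_cfunE -sumr_const.
apply: ler_sum => i; rewrite irr_consttE cfunE irr1_degree.
have /natrP[m ->] := Cnat_cfdot_char_irr i Nchi.
by rewrite pnatr_eq0 -lt0n -natrM ler1n muln_gt0 irr_degree_gt0 andbT.
Qed.

Theorem theorem4p4 (gT : finGroupType) (G A H : {group gT})
    (sdpG : (A ><| H)%g = G) (abA : abelian A)
    (faithful_action : ('C_H(A))%g = 1%g) :
  (forall (p : nat) (rG : mx_representation algC G p),
      mx_faithful rG -> embeds_in_Sym H p)
  /\ (forall d m : nat, is_mdimC G d -> is_min_perm_degree H m -> m <= d).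
Proof.
have [nsAG sHG _ _ _] := sdprod_context sdpG.
have embedH p (rG : mx_representation algC G p) : mx_faithful rG -> embeds_in_Sym H p.
  move=> ffulG; pose chi := cfRepr rG.
  have Nchi : chi \is a character := cfRepr_char rG.
  have ffulchi : cfaithful chi by rewrite /cfaithful cfker_repr.
  apply: (embeds_in_Sym_faithful_on (to := conjg_Iirr_action A)
            (S := [set i in irr_constt ('Res[A] chi)%R])).
  - exact: subset_trans sHG (astabs_irr_constt_Res _ (normal_norm nsAG)).
  - rewrite /faithful -faithful_action subsetI subsetIl /=.
    apply: subset_trans (setSI _ sHG) _.
    exact: astab_irr_constt_Res_sub_cent nsAG abA Nchi ffulchi.
  - rewrite cardsE -(@ler_nat algC) -(cfRepr1 rG) -(cfRes1 A).
    exact/card_irr_constt_le_char1/cfRes_char.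
split=> // d m [[rG ffulG] _] [_ minm]; exact: minm _ (embedH _ _ ffulG).
Qed.
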